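(* The product of finitely many Krasinkiewicz spaces is a Krasinkiewicz space.
   Context: For a compact metrizable $X$, a map $g\colon X\to M$ is Krasinkiewicz if every subcontinuum of $X$ is either contained in a fiber of $g$ or contains a component of some fiber of $g$; a metrizable space $M$ is a Krasinkiewicz space if for every compact metrizable $X$ the Krasinkiewicz maps are dense in $C(X,M)$ with the uniform topology. *)

From Stdlib Require Import Reals.
From Stdlib Require Vectors.Fin.
Open Scope R_scope.

Record Top := {
  pt :> Type;
  is_open : (pt -> Prop) -> Prop;
  open_full : is_open (fun _ => True);
  open_inter : forall U V, is_open U -> is_open V -> is_open (fun x => U x /\ V x);
  open_union : forall (I : Type) (F : I -> pt -> Prop),
      (forall i, is_open (F i)) -> is_open (fun x => exists i, F i x)
}.

Record is_metric (T : Type) (d : T -> T -> R) : Prop := {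
  metric_nonneg : forall x y, 0 <= d x y;
  metric_eq0 : forall x y, d x y = 0 <-> x = y;
  metric_sym : forall x y, d x y = d y x;
  metric_triangle : forall x y z, d x z <= d x y + d y z
}.

Definition compatible_metric (X : Top) (d : X -> X -> R) : Prop :=
  is_metric X d /\
  forall U : X -> Prop,
    is_open X U <-> (forall x, U x -> exists r, 0 < r /\ forall y, d x y < r -> U y).

Definition metrizable (X : Top) : Prop := exists d, compatible_metric X d.

(** Compactness of a subset (in the subspace topology): every open cover has a finite subcover. *)
Definition compact_set (X : Top) (A : X -> Prop) : Prop :=
  forall (I : Type) (F : I -> X -> Prop),
    (forall i, is_open X (F i)) ->
    (forall x, A x -> exists i, F i x) ->
    exists l : list I, forall x, A x -> exists i, List.In i l /\ F i x.

Definition compact_space (X : Top) : Prop := compact_set X (fun _ => True).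

Definition compact_metrizable (X : Top) : Prop := compact_space X /\ metrizable X.

(** Connectedness of a subset (in the subspace topology). *)
Definition connected_set (X : Top) (A : X -> Prop) : Prop :=
  ~ exists U V : X -> Prop,
      is_open X U /\ is_open X V /\
      (forall x, A x -> U x \/ V x) /\
      (exists x, A x /\ U x) /\ (exists x, A x /\ V x) /\
      (forall x, A x -> U x -> V x -> False).

Definition subcontinuum (X : Top) (K : X -> Prop) : Prop :=
  (exists x, K x) /\ compact_set X K /\ connected_set X K.

Definition subset {T : Type} (A B : T -> Prop) : Prop := forall x, A x -> B x.

Definition component_of (X : Top) (F C : X -> Prop) : Prop :=
  (exists x, C x) /\ subset C F /\ connected_set X C /\
  forall D, connected_set X D -> subset C D -> subset D F -> subset D C.

Definition fiber {X M : Type} (g : X -> M) (m : M) : X -> Prop := fun x => g x = m.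

Definition continuous (X Y : Top) (f : X -> Y) : Prop :=
  forall V : Y -> Prop, is_open Y V -> is_open X (fun x => V (f x)).

Definition krasinkiewicz_map (X M : Top) (g : X -> M) : Prop :=
  forall K : X -> Prop, subcontinuum X K ->
    (exists m, subset K (fiber g m)) \/
    (exists m C, component_of X (fiber g m) C /\ subset C K).

(** Krasinkiewicz space: metrizable, and for every compact metrizable X the
    Krasinkiewicz maps are dense in C(X,M) with the uniform topology
    (the uniform topology w.r.t. any compatible metric on M; for compact X it
    does not depend on the choice of metric). *)
Definition krasinkiewicz_space (M : Top) : Prop :=
  metrizable M /\
  forall X : Top, compact_metrizable X ->
  forall d : M -> M -> R, compatible_metric M d ->
  forall f : X -> M, continuous X M f ->
  forall eps : R, 0 < eps ->
  exists g : X -> M, continuous X M g /\ krasinkiewicz_map X M g /\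
    forall x, d (f x) (g x) < eps.

(** Finite products (product topology; for finitely many factors the basic
    open boxes constrain every coordinate). *)
Section Prod.
Variables (n : nat) (M : Fin.t n -> Top).

Definition prod_open (U : (forall i, M i) -> Prop) : Prop :=
  forall x, U x -> exists V : forall i, M i -> Prop,
    (forall i, is_open (M i) (V i)) /\ (forall i, V i (x i)) /\
    (forall y, (forall i, V i (y i)) -> U y).

Lemma prod_open_full : prod_open (fun _ => True).
Proof.
  intros x _. exists (fun i _ => True). repeat split; auto.
  intro i. apply open_full.
Qed.

Lemma prod_open_inter U V : prod_open U -> prod_open V -> prod_open (fun x => U x /\ V x).
Proof.
  intros HU HV x [Ux Vx].
  destruct (HU x Ux) as [A [HA1 [HA2 HA3]]].
  destruct (HV x Vx) as [B [HB1 [HB2 HB3]]].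
  exists (fun i z => A i z /\ B i z). repeat split.
  - intro i. apply open_inter; auto.
  - apply HA2.
  - apply HB2.
  - apply HA3. intro i. apply H.
  - apply HB3. intro i. apply H.
Qed.

Lemma prod_open_union (I : Type) (F : I -> (forall i, M i) -> Prop) :
  (forall i, prod_open (F i)) -> prod_open (fun x => exists i, F i x).
Proof.
  intros HF x [j Hj].
  destruct (HF j x Hj) as [A [H1 [H2 H3]]].
  exists A. repeat split; auto. intros y Hy. exists j. auto.
Qed.

Definition prodTop : Top :=
  {| pt := forall i, M i; is_open := prod_open;
     open_full := prod_open_full; open_inter := prod_open_inter;
     open_union := prod_open_union |}.
End Prod.

(** Let [M_0, ..., M_(n-1)] be Krasinkiewicz spaces with compatible metrics
  [d_i].  The product is metrized by the maximum metric
  [max_dist x y = max_i d_i (x i) (y i)], so it is metrizable.  For density,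
  fix a compact metrizable [X], an arbitrary compatible metric [d] on the
  product, a continuous [f : X -> prod M_i] and [eps > 0]:
  - since [X] is compact, the two compatible metrics [d] and [max_dist] are
    uniformly comparable along [f] ([uniform_comparison]): there is [delta]
    with [max_dist (f x) z < delta -> d (f x) z < eps];
  - each coordinate [f_i] is continuous and is [delta]-approximated by a
    continuous Krasinkiewicz map [g_i : X -> M_i];
  - the tuple [g = (g_i)_i] is continuous ([tuple_continuous]) and
    Krasinkiewicz ([tuple_krasinkiewicz]): a subcontinuum either contains a
    component of a fibre of some [g_i], which then contains a component of a
    fibre of [g] (fibres of [g] lie in fibres of [g_i]), or every [g_i] is
    constant on it, so [g] is too. *)

From Stdlib Require Import Reals Lra List.
From Stdlib Require Vectors.Fin.
From Stdlib Require Import Classical ClassicalEpsilon FunctionalExtensionality.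
From Stdlib Require Import PropExtensionality Eqdep_dec.
Open Scope R_scope.

Lemma dependent_choice (I : Type) (A : I -> Type) (P : forall i, A i -> Prop) :
  (forall i, exists a, P i a) -> exists h : forall i, A i, forall i, P i (h i).
Proof.
  intros H.
  exists (fun i => proj1_sig (constructive_indefinite_description _ (H i))).
  intro i. exact (proj2_sig (constructive_indefinite_description _ (H i))).
Qed.

(** [fin_max n f] is the maximum of [0] and the values [f i]. *)
Fixpoint fin_max (n : nat) : (Fin.t n -> R) -> R :=
  match n return (Fin.t n -> R) -> R with
  | O => fun _ => 0
  | S k => fun f => Rmax (f Fin.F1) (fin_max k (fun j => f (Fin.FS j)))
  end.

Lemma fin_max_nonneg n (f : Fin.t n -> R) : 0 <= fin_max n f.
Proof.
  revert f; induction n as [|n IH]; intros f; simpl; [lra|].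
  eapply Rle_trans; [apply IH | apply Rmax_r].
Qed.

Lemma fin_max_ge n (f : Fin.t n -> R) i : f i <= fin_max n f.
Proof.
  revert f i; induction n as [|n IH]; intros f i.
  - exact (Fin.case0 (fun i => _) i).
  - apply (Fin.caseS' i); simpl.
    + apply Rmax_l.
    + intro j. eapply Rle_trans; [apply (IH (fun j => f (Fin.FS j)) j) | apply Rmax_r].
Qed.

Lemma fin_max_le n (f : Fin.t n -> R) r :
  0 <= r -> (forall i, f i <= r) -> fin_max n f <= r.
Proof.
  revert f; induction n as [|n IH]; intros f Hr H; simpl; [lra|].
  apply Rmax_lub; auto.
Qed.

Lemma fin_max_lt n (f : Fin.t n -> R) r :
  0 < r -> (forall i, f i < r) -> fin_max n f < r.
Proof.
  revert f; induction n as [|n IH]; intros f Hr H; simpl; [lra|].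
  apply Rmax_lub_lt; auto.
Qed.

Lemma fin_common_radius n (P : Fin.t n -> R -> Prop) :
  (forall i r r', 0 < r' <= r -> P i r -> P i r') ->
  (forall i, exists r, 0 < r /\ P i r) -> exists r, 0 < r /\ forall i, P i r.
Proof.
  revert P; induction n as [|n IH]; intros P Hmono Hex.
  - exists 1. split; [lra|]. intro i; exact (Fin.case0 (fun i => _) i).
  - destruct (Hex Fin.F1) as [r0 [r0pos H0]].
    destruct (IH (fun j r => P (Fin.FS j) r)) as [r1 [r1pos H1]];
      [intros; eapply Hmono; eauto | intro; apply Hex |].
    assert (Hmin : 0 < Rmin r0 r1) by (apply Rmin_glb_lt; assumption).
    exists (Rmin r0 r1). split; [exact Hmin|].
    intro i. apply (Fin.caseS' i).
    + eapply Hmono; [|exact H0]. split; [exact Hmin | apply Rmin_l].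
    + intro j. eapply Hmono; [|exact (H1 j)]. split; [exact Hmin | apply Rmin_r].
Qed.

Lemma list_common_lower_bound (A : Type) (h : A -> R) (l : list A) :
  (forall a, In a l -> 0 < h a) -> exists delta, 0 < delta /\ forall a, In a l -> delta <= h a.
Proof.
  induction l as [|a l IH]; intros Hpos.
  - exists 1. split; [lra | intros a []].
  - destruct IH as [delta [Hdelta Hle]]; [intros b Hb; apply Hpos; right; exact Hb|].
    exists (Rmin (h a) delta). split.
    + apply Rmin_glb_lt; [apply Hpos; left; reflexivity | exact Hdelta].
    + intros b [<- | Hb]; [apply Rmin_l |].
      eapply Rle_trans; [apply Rmin_r | apply Hle; exact Hb].
Qed.

Lemma connected_union (X : Top) (A B : X -> Prop) x :
  connected_set X A -> connected_set X B -> A x -> B x ->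
  connected_set X (fun y => A y \/ B y).
Proof.
  intros HA HB Ax Bx [U [V [HU [HV [Hcov [[u [Hu Uu]] [[v [Hv Vv]] Hdis]]]]]]].
  (* Whichever of [U], [V] contains [x], the point of the union in the other
     one lies in [A] or in [B], and that set is then disconnected. *)
  assert (Hsplit : forall S : X -> Prop, connected_set X S -> S x ->
            (forall y, S y -> A y \/ B y) -> forall w, S w ->
            (U x /\ V w) \/ (V x /\ U w) -> False).
  { intros S HS Sx HSAB w Sw Hxw. apply HS. exists U, V.
    refine (conj HU (conj HV (conj _ (conj _ (conj _ _))))).
    - intros y Sy. apply Hcov, HSAB, Sy.
    - destruct Hxw as [[Ux _] | [_ Uw]]; [exists x | exists w]; auto.
    - destruct Hxw as [[_ Vw] | [Vx _]]; [exists w | exists x]; auto.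
    - intros y Sy. apply Hdis, HSAB, Sy. }
  destruct (Hcov x (or_introl Ax)) as [Ux | Vx].
  - destruct Hv as [Av | Bv].
    + apply (Hsplit A HA Ax (fun y Ay => or_introl Ay) v Av); auto.
    + apply (Hsplit B HB Bx (fun y By => or_intror By) v Bv); auto.
  - destruct Hu as [Au | Bu].
    + apply (Hsplit A HA Ax (fun y Ay => or_introl Ay) u Au); auto.
    + apply (Hsplit B HB Bx (fun y By => or_intror By) u Bu); auto.
Qed.

Lemma singleton_connected (X : Top) (x : X) : connected_set X (fun y => y = x).
Proof.
  intros [U [V [_ [_ [_ [[u [-> Uu]] [[v [-> Vv]] Hdis]]]]]]].
  exact (Hdis x eq_refl Uu Vv).
Qed.

(** Every point of a set lies in a component of it: the union of all
    connected subsets of [F] through [x]. *)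
Lemma component_exists (X : Top) (F : X -> Prop) x :
  F x -> exists C, component_of X F C /\ C x.
Proof.
  intros Fx.
  set (C := fun y => exists D, connected_set X D /\ subset D F /\ D x /\ D y).
  assert (Cx : C x).
  { exists (fun y => y = x). split; [apply singleton_connected|].
    split; [intros y ->; exact Fx | auto]. }
  assert (DC : forall D, connected_set X D -> subset D F -> D x -> subset D C).
  { intros D HD DF Dx y Dy. exists D; auto. }
  exists C. split; [|exact Cx].
  split; [exists x; exact Cx|].
  split; [intros y [D [_ [DF [_ Dy]]]]; auto|].
  split.
  - (* a separation of [C] would separate one of the sets [D] forming it *)
    intros [U [V [HU [HV [Hcov [[u [Cu Uu]] [[v [Cv Vv]] Hdis]]]]]]].
    assert (Hsep : forall D w, connected_set X D -> subset D F -> D x -> D w ->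
              (U x /\ V w) \/ (V x /\ U w) -> False).
    { intros D w HD DF Dx Dw Hxw. apply HD. exists U, V.
      refine (conj HU (conj HV (conj _ (conj _ (conj _ _))))).
      - intros y Dy; apply Hcov, (DC D); auto.
      - destruct Hxw as [[Ux _] | [_ Uw]]; [exists x | exists w]; auto.
      - destruct Hxw as [[_ Vw] | [Vx _]]; [exists w | exists x]; auto.
      - intros y Dy; apply Hdis, (DC D); auto. }
    destruct (Hcov x Cx) as [Ux | Vx].
    + destruct Cv as [D [HD [DF [Dx Dv]]]]. apply (Hsep D v); auto.
    + destruct Cu as [D [HD [DF [Dx Du]]]]. apply (Hsep D u); auto.
  - intros D HD CD DF y Dy. exists D. repeat split; auto.
Qed.

Lemma component_monotone (X : Top) (F G C D : X -> Prop) x :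
  subset F G -> component_of X F C -> component_of X G D -> C x -> D x ->
  subset C D.
Proof.
  intros FG [_ [CF [Cconn _]]] [_ [DG [Dconn Dmax]]] Cx Dx y Cy.
  apply (Dmax (fun z => C z \/ D z)).
  - apply (connected_union X C D x); assumption.
  - intros z Dz; right; exact Dz.
  - intros z [Cz | Dz]; [apply FG, CF, Cz | apply DG, Dz].
  - left; exact Cy.
Qed.

Lemma dist_self (X : Top) d : compatible_metric X d -> forall x, d x x = 0.
Proof. intros [Hm _] x. apply (metric_eq0 _ _ Hm). reflexivity. Qed.

Lemma ball_open (X : Top) d :
  compatible_metric X d -> forall x r, is_open X (fun y => d x y < r).
Proof.
  intros [Hm Hc] x r. apply Hc. intros y Hy. exists (r - d x y). split; [lra|].
  intros z Hz. pose proof (metric_triangle _ _ Hm x y z). lra.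
Qed.

Lemma open_contains_ball (X : Top) d :
  compatible_metric X d -> forall U x, is_open X U -> U x ->
  exists r, 0 < r /\ forall y, d x y < r -> U y.
Proof. intros [_ Hc] U x HU Ux. exact (proj1 (Hc U) HU x Ux). Qed.

Lemma ball_inside_ball (X : Top) (d e : X -> X -> R) :
  compatible_metric X d -> compatible_metric X e ->
  forall y eps, 0 < eps -> exists r, 0 < r /\ forall z, e y z < r -> d y z < eps.
Proof.
  intros Hd He y eps Heps.
  apply (open_contains_ball X e He (fun z => d y z < eps) y (ball_open X d Hd y eps)).
  rewrite (dist_self X d Hd). exact Heps.
Qed.

Lemma open_ext (X : Top) (U V : X -> Prop) :
  (forall x, U x <-> V x) -> is_open X U -> is_open X V.
Proof.
  intros HUV HU.
  replace V with U; [exact HU|].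
  apply functional_extensionality; intro x; apply propositional_extensionality; apply HUV.
Qed.

Lemma fin_inter_open (X : Top) n (W : Fin.t n -> X -> Prop) :
  (forall i, is_open X (W i)) -> is_open X (fun x => forall i, W i x).
Proof.
  revert W; induction n as [|n IH]; intros W HW.
  - apply (open_ext X (fun _ => True)); [|apply open_full].
    intro x; split; [intros _ i; exact (Fin.case0 (fun i => _) i) | auto].
  - apply (open_ext X (fun x => W Fin.F1 x /\ (forall j, W (Fin.FS j) x))).
    + intro x; split; [intros [H1 H2] i; apply (Fin.caseS' i); auto | auto].
    + apply open_inter; [auto | apply (IH (fun j => W (Fin.FS j))); auto].
Qed.

(** The basic open box constraining only coordinate [i] to lie in [V]. *)
Definition cylinder n (M : Fin.t n -> Top) (i : Fin.t n) (V : M i -> Prop)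
    (j : Fin.t n) : M j -> Prop :=
  match Fin.eq_dec i j with
  | left e => eq_rect i (fun k => M k -> Prop) V j e
  | right _ => fun _ => True
  end.

Lemma cylinder_at n (M : Fin.t n -> Top) i (V : M i -> Prop) z :
  cylinder n M i V i z <-> V z.
Proof.
  unfold cylinder. destruct (Fin.eq_dec i i) as [e | e]; [|congruence].
  rewrite (UIP_dec Fin.eq_dec e eq_refl). reflexivity.
Qed.

Lemma projection_open n (M : Fin.t n -> Top) i (V : M i -> Prop) :
  is_open (M i) V -> prod_open n M (fun y => V (y i)).
Proof.
  intros HV x Hx. exists (cylinder n M i V). split; [|split].
  - intro j. unfold cylinder.
    destruct (Fin.eq_dec i j) as [e | _]; [destruct e; exact HV | apply open_full].
  - intro j. unfold cylinder.
    destruct (Fin.eq_dec i j) as [e | _]; [destruct e; exact Hx | exact I].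
  - intros y Hy. apply (cylinder_at n M i V), Hy.
Qed.

Lemma coordinate_continuous (X : Top) n (M : Fin.t n -> Top) (f : X -> prodTop n M) i :
  continuous X (prodTop n M) f -> continuous X (M i) (fun x => f x i).
Proof.
  intros Hf V HV. apply (Hf (fun y => V (y i))), projection_open, HV.
Qed.

(** A map into the product is continuous when all its coordinates are: the
    preimage of an open set is the union of the preimages of the open boxes
    it contains. *)
Lemma tuple_continuous (X : Top) n (M : Fin.t n -> Top) (g : forall i, X -> M i) :
  (forall i, continuous X (M i) (g i)) -> continuous X (prodTop n M) (fun x i => g i x).
Proof.
  intros Hg U HU. change (prod_open n M U) in HU.
  set (Box := {V : forall i, M i -> Prop | (forall i, is_open (M i) (V i)) /\
                forall y, (forall i, V i (y i)) -> U y}).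
  apply (open_ext X (fun x => exists v : Box, forall i, proj1_sig v i (g i x))).
  - intro x; split.
    + intros [v Hv]. apply (proj2 (proj2_sig v)); exact Hv.
    + intros Hx. destruct (HU _ Hx) as [V [HVopen [HVx HVU]]].
      exists (exist _ V (conj HVopen HVU)). exact HVx.
  - apply open_union. intro v. apply fin_inter_open. intro i.
    apply (Hg i (proj1_sig v i)), (proj1 (proj2_sig v)).
Qed.

Definition max_dist n (M : Fin.t n -> Top) (dm : forall i, M i -> M i -> R)
    (x y : forall i, M i) : R :=
  fin_max n (fun i => dm i (x i) (y i)).

Lemma max_dist_is_metric n (M : Fin.t n -> Top) (dm : forall i, M i -> M i -> R) :
  (forall i, is_metric (M i) (dm i)) -> is_metric (forall i, M i) (max_dist n M dm).
Proof.
  intros Hd. unfold max_dist. constructor.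
  - intros; apply fin_max_nonneg.
  - intros x y; split.
    + intro H0. apply functional_extensionality_dep. intro i.
      apply (metric_eq0 _ _ (Hd i)). apply Rle_antisym.
      * rewrite <- H0. apply (fin_max_ge n (fun i => dm i (x i) (y i)) i).
      * apply (metric_nonneg _ _ (Hd i)).
    + intros <-. apply Rle_antisym; [|apply fin_max_nonneg].
      apply fin_max_le; [lra|]. intro i.
      rewrite (proj2 (metric_eq0 _ _ (Hd i) (x i) (x i)) eq_refl). lra.
  - intros x y. apply Rle_antisym; apply fin_max_le; try apply fin_max_nonneg;
      intro i; rewrite (metric_sym _ _ (Hd i));
      apply (fin_max_ge n (fun i => dm i _ _) i).
  - intros x y z. apply fin_max_le.
    + pose proof (fin_max_nonneg n (fun i => dm i (x i) (y i))).
      pose proof (fin_max_nonneg n (fun i => dm i (y i) (z i))). lra.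
    + intro i. pose proof (metric_triangle _ _ (Hd i) (x i) (y i) (z i)).
      pose proof (fin_max_ge n (fun i => dm i (x i) (y i)) i).
      pose proof (fin_max_ge n (fun i => dm i (y i) (z i)) i). simpl in *. lra.
Qed.

(** The maximum metric induces the product topology: balls are open boxes,
    and an open box around [x] contains the ball of the smallest radius
    that fits in every coordinate. *)
Lemma max_dist_compatible n (M : Fin.t n -> Top) (dm : forall i, M i -> M i -> R) :
  (forall i, compatible_metric (M i) (dm i)) ->
  compatible_metric (prodTop n M) (max_dist n M dm).
Proof.
  intros Hd. split; [apply max_dist_is_metric; intro i; apply Hd|].
  intro U; split.
  - intros HU x Ux. destruct (HU x Ux) as [V [HVopen [HVx HVU]]].
    destruct (fin_common_radius n (fun i r => forall z, dm i (x i) z < r -> V i z))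
      as [r [rpos Hr]].
    + intros i r r' Hr' H z Hz. apply H. lra.
    + intro i. exact (open_contains_ball _ _ (Hd i) (V i) (x i) (HVopen i) (HVx i)).
    + exists r; split; [exact rpos|]. intros y Hy. apply HVU. intro i. apply Hr.
      eapply Rle_lt_trans; [apply (fin_max_ge n (fun i => dm i (x i) (y i)) i) | exact Hy].
  - intros H x Ux. destruct (H x Ux) as [r [rpos Hr]].
    exists (fun i z => dm i (x i) z < r). split; [|split].
    + intro i; apply ball_open, Hd.
    + intro i. rewrite (dist_self _ _ (Hd i)). exact rpos.
    + intros y Hy. apply Hr, fin_max_lt; assumption.
Qed.

(** Proof: cover
    [X] by the sets [e(f x0, f x) < r(x0)/2], where [r(x0)] is the radius of
    an [e]-ball inside the [d]-ball of radius [eps/2] at [f x0]; a finite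
    subcover yields [delta], and the triangle inequality concludes. *)
Lemma uniform_comparison (X Y : Top) (d e : Y -> Y -> R) (f : X -> Y) eps :
  compact_space X -> compatible_metric Y d -> compatible_metric Y e ->
  continuous X Y f -> 0 < eps ->
  exists delta, 0 < delta /\ forall x z, e (f x) z < delta -> d (f x) z < eps.
Proof.
  intros Hcomp Hd He Hf Heps.
  destruct (dependent_choice X (fun _ => R)
              (fun x0 r => 0 < r /\ forall z, e (f x0) z < r -> d (f x0) z < eps / 2))
    as [r Hr].
  { intro x0. apply (ball_inside_ball Y d e Hd He). lra. }
  destruct (Hcomp X (fun x0 x => e (f x0) (f x) < r x0 / 2)) as [l Hcover].
  - intro x0. apply (Hf (fun y => e (f x0) y < r x0 / 2)), ball_open, He.
  - intros x _. exists x. rewrite (dist_self Y e He). destruct (Hr x). lra.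
  - destruct (list_common_lower_bound X (fun x0 => r x0 / 2) l) as [delta [Hdelta Hle]].
    { intros x0 _. destruct (Hr x0). lra. }
    exists delta. split; [exact Hdelta|]. intros x z Hz.
    destruct (Hcover x I) as [x0 [Hin Hclose]].
    specialize (Hle x0 Hin). destruct (Hr x0) as [_ Hball].
    assert (Hfx : d (f x0) (f x) < eps / 2) by (apply Hball; lra).
    assert (Hz0 : d (f x0) z < eps / 2).
    { apply Hball. pose proof (metric_triangle _ _ (proj1 He) (f x0) (f x) z). lra. }
    pose proof (metric_triangle _ _ (proj1 Hd) (f x) (f x0) z).
    rewrite (metric_sym _ _ (proj1 Hd) (f x) (f x0)) in *. lra.
Qed.

Lemma tuple_krasinkiewicz (X : Top) n (M : Fin.t n -> Top) (g : forall i, X -> M i) :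
  (forall i, krasinkiewicz_map X (M i) (g i)) ->
  krasinkiewicz_map X (prodTop n M) (fun x i => g i x).
Proof.
  intros Hg K HK.
  destruct (classic (exists i m C, component_of X (fiber (g i) m) C /\ subset C K))
    as [[i [mi [Ci [HCi CiK]]]] | Hnone].
  - (* [K] contains a component [Ci] of a fibre of [g i]; the component of the
       fibre of the tuple through a point of [Ci] lies inside [Ci]. *)
    right. pose proof HCi as [[x Cix] [CiF _]].
    destruct (component_exists X (fiber (fun x i => g i x) (fun i => g i x)) x eq_refl)
      as [C [HC Cx]].
    exists (fun i => g i x), C. split; [exact HC|].
    intros y Cy. apply CiK.
    refine (component_monotone X _ (fiber (g i) mi) C Ci x _ HC HCi Cx Cix y Cy).
    intros z Hz. unfold fiber in *.
    rewrite <- (CiF x Cix). exact (f_equal (fun h => h i) Hz).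
  - (* otherwise every [g i] is constant on [K], hence so is the tuple *)
    left. pose proof HK as [[x0 Kx0] _].
    exists (fun i => g i x0). intros y Ky. unfold fiber.
    apply functional_extensionality_dep. intro i.
    destruct (Hg i K HK) as [[m Hm] | [m [C HC]]].
    + unfold fiber in Hm. rewrite (Hm y Ky), (Hm x0 Kx0). reflexivity.
    + exfalso; apply Hnone. exists i, m, C; exact HC.
Qed.

Theorem proposition3p5 (n : nat) (M : Fin.t n -> Top) :
  (forall i, krasinkiewicz_space (M i)) -> krasinkiewicz_space (prodTop n M).
Proof.
  intros HK.
  destruct (dependent_choice _ (fun i => M i -> M i -> R)
              (fun i dm => compatible_metric (M i) dm) (fun i => proj1 (HK i)))
    as [dm Hdm].
  pose proof (max_dist_compatible n M dm Hdm) as Hmax.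
  split; [exists (max_dist n M dm); exact Hmax|].
  intros X HX d Hd f Hf eps Heps.
  destruct (uniform_comparison X (prodTop n M) d (max_dist n M dm) f eps
              (proj1 HX) Hd Hmax Hf Heps) as [delta [Hdelta Hcompare]].
  destruct (dependent_choice _ (fun i => X -> M i)
              (fun i gi => continuous X (M i) gi /\ krasinkiewicz_map X (M i) gi /\
                           forall x, dm i (f x i) (gi x) < delta)) as [g Hg].
  { intro i. apply (proj2 (HK i) X HX (dm i) (Hdm i) (fun x => f x i));
      [apply coordinate_continuous, Hf | exact Hdelta]. }
  exists (fun x i => g i x). split; [|split].
  - apply tuple_continuous. intro i; apply Hg.
  - apply tuple_krasinkiewicz. intro i; apply Hg.
  - intro x. apply Hcompare, fin_max_lt; [exact Hdelta|]. intro i; apply Hg.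
Qed.
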